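(* The unary language $\mathtt{UGAUSS}=\{a^{n^2+n}\mid n\in\mathbb{N}\}$ is recognized by some real-time deterministic vector automaton of dimension $2$ ($\mathrm{rtDVA}(2)$).
   Context: Here $\mathbb{N}=\{0,1,2,\dots\}$. A real-time deterministic vector automaton of dimension $k$ ($\mathrm{rtDVA}(k)$) is a 6-tuple $\mathcal{V}=(Q,\Sigma,\delta,q_0,Q_a,v)$ where $Q$ is a finite set of states, $q_0\in Q$ the initial state, $Q_a\subseteq Q$ the accept states, $\Sigma$ the input alphabet, $v\in\mathbb{Q}^k$ an initial row vector (freely chosen), and $\delta:Q\times(\Sigma\cup\{\cent,\$\})\times\{=,\neq\}\to Q\times S$, with $S$ the set of $k\times k$ rational matrices. On input $w$ the machine reads $\cent w\$$ left to right, one symbol per step, starting in $q_0$ with vector $v$; in state $q$ reading $\sigma$, with $\omega$ equal to ''$=$'' iff the first vector entry equals $1$, if $\delta(q,\sigma,\omega)=(q',M)$ it moves to $q'$ and multiplies the row vector on the right by $M$. The input is accepted iff after processing $\$$ the state is in $Q_a$ and the first vector entry equals $1$. *)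

From HB Require Import structures.
From mathcomp Require Import all_boot all_order all_algebra.
Set Implicit Arguments. Unset Strict Implicit. Unset Printing Implicit Defensive.
Import Order.TTheory GRing.Theory Num.Theory.
Local Open Scope ring_scope.

Inductive tape_sym (Sigma : Type) : Type :=
  | Sym of Sigma
  | Cent
  | Dollar.
Arguments Cent {Sigma}.
Arguments Dollar {Sigma}.

(* An rtDVA(k): finite state set Q, input alphabet Sigma, dimension k.
   The boolean argument of delta is true iff omega is "=" (first entry equals 1). *)
Record rtDVA (Q : finType) (Sigma : Type) (k : nat) := RtDVA {
  dva_delta : Q -> tape_sym Sigma -> bool -> Q * 'M[rat]_k;
  dva_q0 : Q;
  dva_acc : {set Q};
  dva_v : 'rV[rat]_k
}.

(* First entry of a row vector (index 0); a vector of dimension 0 has none,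
   we use the value 0 in that degenerate case. *)
Definition first_entry (k : nat) (v : 'rV[rat]_k) : rat :=
  \sum_(j < k | val j == 0%N) v 0 j.

Definition dva_step (Q : finType) (Sigma : Type) (k : nat) (V : rtDVA Q Sigma k)
    (c : Q * 'rV[rat]_k) (s : tape_sym Sigma) : Q * 'rV[rat]_k :=
  let: (q, v) := c in
  let: (q', M) := dva_delta V q s (first_entry v == 1) in
  (q', v *m M).

Definition dva_run (Q : finType) (Sigma : Type) (k : nat) (V : rtDVA Q Sigma k)
    (w : seq Sigma) : Q * 'rV[rat]_k :=
  foldl (dva_step V) (dva_q0 V, dva_v V) (Cent :: rcons (map (@Sym Sigma) w) Dollar).

Definition dva_accepts (Q : finType) (Sigma : Type) (k : nat) (V : rtDVA Q Sigma k)
    (w : seq Sigma) : Prop :=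
  let: (q, v) := dva_run V w in (q \in dva_acc V) /\ first_entry v = 1.

Definition dva_recognizes (Q : finType) (Sigma : Type) (k : nat) (V : rtDVA Q Sigma k)
    (L : seq Sigma -> Prop) : Prop :=
  forall w, dva_accepts V w <-> L w.

(* The unary alphabet {a} is modelled by unit (a = tt). *)
Definition UGAUSS (w : seq unit) : Prop :=
  exists n : nat, w = nseq (n ^ 2 + n)%N tt.

From mathcomp Require Import all_boot all_order all_algebra.
From mathcomp Require Import zify ring.
Set Implicit Arguments. Unset Strict Implicit. Unset Printing Implicit Defensive.
Import Order.TTheory GRing.Theory Num.Theory.
Local Open Scope ring_scope.

(* The automaton has one state and keeps the vector (x, y) with y = 4^-k after
   k completed phases.  Reading a letter doubles x unless x = 1, in which case
   it resets the vector to (y/2, y/4) and a new phase starts.  In phase k the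
   first entry climbs from 2^-(2k+1) back to 1 in 2k+2 steps, so it equals 1
   exactly after 0 + 2 + 4 + ... + 2k = k(k+1) letters. *)

Definition row2 (x y : rat) : 'rV[rat]_2 :=
  \row_(j < 2) (if val j == 0%N then x else y).

Definition double_mx : 'M[rat]_2 := \matrix_(i < 2, j < 2)
  (if val i == 0%N then (if val j == 0%N then 2 else 0)
   else (if val j == 0%N then 0 else 1)).

Definition reset_mx : 'M[rat]_2 := \matrix_(i < 2, j < 2)
  (if val i == 0%N then 0 else (if val j == 0%N then 1/2 else 1/4)).

Lemma row2_double x y : row2 x y *m double_mx = row2 (2 * x) y.
Proof.
apply/rowP => j; rewrite !mxE big_ord_recl big_ord1 !mxE /=.
by case: j => [[|[|j]] Hj] //=; ring.
Qed.

Lemma row2_reset x y : row2 x y *m reset_mx = row2 (y / 2) (y / 4).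
Proof.
apply/rowP => j; rewrite !mxE big_ord_recl big_ord1 !mxE /=.
by case: j => [[|[|j]] Hj] //=; ring.
Qed.

Lemma first_entry_row2 x y : first_entry (row2 x y) = x.
Proof. by rewrite /first_entry big_mkcond big_ord_recl big_ord1 !mxE /= addr0. Qed.

Definition gauss_step (p : rat * rat) : rat * rat :=
  if p.1 == 1 then (p.2 / 2, p.2 / 4) else (2 * p.1, p.2).

Definition gauss_dva : rtDVA unit unit 2 :=
  @RtDVA unit unit 2
    (fun _ s is_one => if s is Sym _ then (tt, if is_one then reset_mx else double_mx)
                       else (tt, 1%:M))
    tt setT (row2 1 1).

Lemma gauss_dva_letters m p :
  foldl (dva_step gauss_dva) (tt, row2 p.1 p.2) (nseq m (Sym tt))
  = (tt, row2 (iter m gauss_step p).1 (iter m gauss_step p).2).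
Proof.
elim: m p => [|m IH] [x y] //=.
rewrite /dva_step /= first_entry_row2 -/(iter m.+1 gauss_step (x, y)) iterSr.
rewrite /gauss_step /=; case: eqP => [-> | _].
- by rewrite row2_reset (IH (y / 2, y / 4)).
- by rewrite row2_double (IH (2 * x, y)).
Qed.

Lemma unit_seq_nseq (w : seq unit) : w = nseq (size w) tt.
Proof. by elim: w => [|[] w IH] //=; rewrite -IH. Qed.

Lemma gauss_dva_run w :
  dva_run gauss_dva w
  = (tt, row2 (iter (size w) gauss_step (1, 1)).1 (iter (size w) gauss_step (1, 1)).2).
Proof.
rewrite /dva_run {1}[w]unit_seq_nseq map_nseq /= foldl_rcons.
by rewrite /dva_step /= mulmx1 (gauss_dva_letters _ (1, 1)) /dva_step /= mulmx1.
Qed.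

Lemma eqr_pow2 r s : ((2 : rat) ^+ r == 2 ^+ s) = (r == s).
Proof. by rewrite eq_le !ler_eXn2l ?ltr1n // -eqn_leq. Qed.

Lemma gauss_phase k r : (r <= 2 * k + 1)%N ->
  iter r.+1 gauss_step (1, 1 / 4 ^+ k) = (2 ^+ r / 2 ^+ (2 * k + 1), 1 / 4 ^+ k.+1).
Proof.
elim: r => [|r IH] Hr.
- have -> : (4 : rat) = 2 ^+ 2 by rewrite expr2; ring.
  rewrite /= /gauss_step /= -!exprM addn1 mulnS !exprS expr0.
  have : (2 : rat) ^+ (2 * k) != 0 by rewrite expf_neq0.
  by set t := (2 : rat) ^+ (2 * k) => t_neq0; congr pair; field.
- rewrite iterS IH; last lia.
  have not_one : 2 ^+ r / 2 ^+ (2 * k + 1) != 1 :> rat.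
    apply/negP => /eqP/divr1_eq/eqP; rewrite eqr_pow2 => /eqP; lia.
  by rewrite /gauss_step /= (negbTE not_one) [2 ^+ r.+1]exprS mulrA.
Qed.

Lemma gauss_iter_pronic k : iter (k * k.+1) gauss_step (1, 1) = (1, 1 / 4 ^+ k).
Proof.
elim: k => [|k IH]; first by rewrite /= expr0 divr1.
have -> : (k.+1 * k.+2 = (2 * k + 1).+1 + k * k.+1)%N by lia.
by rewrite iterD IH gauss_phase //= divff // expf_neq0.
Qed.

Lemma pronic_bracket m : exists k, (k * k.+1 <= m < k.+1 * k.+2)%N.
Proof.
elim: m => [|m [k Hk]]; first by exists 0%N.
by case: (ltnP m.+1 (k.+1 * k.+2)) => H; [exists k | exists k.+1]; lia.
Qed.

Lemma gauss_iter_first_eq1 m :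
  (iter m gauss_step (1, 1)).1 = 1 <-> exists n : nat, m = (n ^ 2 + n)%N.
Proof.
split; last first.
  by move=> [n ->]; rewrite (_ : n ^ 2 + n = n * n.+1)%N ?gauss_iter_pronic //; lia.
have [k Hk] := pronic_bracket m.
rewrite -(subnK (proj1 (andP Hk))) iterD gauss_iter_pronic.
case Er: (m - k * k.+1)%N => [|r]; first by exists k; lia.
rewrite gauss_phase /=; last lia.
by move/divr1_eq/eqP; rewrite eqr_pow2 => /eqP; lia.
Qed.

Theorem theorem2 :
  exists (Q : finType) (V : rtDVA Q unit 2), dva_recognizes V UGAUSS.
Proof.
exists unit, gauss_dva => w.
rewrite /dva_accepts gauss_dva_run first_entry_row2 in_setT gauss_iter_first_eq1.
split=> [[_ [n En]] | [n ->]]; last by rewrite size_nseq; split=> //; exists n.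
by exists n; rewrite [w]unit_seq_nseq En.
Qed.
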